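(* Let $f(X)=X^n+a_{n-1}X^{n-1}+\dots+a_1X+a_0\in K[X]$, $n\geq 1$, be a monic regular polynomial. For each value $m$ that is the valuation of some root of $f$ in $\overline{K}$, let $f_m(X)=\prod (X-\zeta)$, the product taken (with multiplicity) over the roots $\zeta\in\overline{K}$ of $f$ with $v(\zeta)=m$, so that $f=\prod_m f_m$. Then every factor $f_m$ is a regular polynomial.
   Context: $K$ is a field complete with respect to a non-archimedean discrete valuation $v$ with $v(\pi)=1$ for a uniformizer $\pi$ of the valuation ring $A=\{x\in K: v(x)\geq 0\}$; the residue field $\kappa=A/\pi A$ is finite with $q$ elements and characteristic $p$; $v$ also denotes the unique extension of the valuation to an algebraic closure $\overline{K}$. It is known that each $f_m$ has coefficients in $K$. For $h=\sum_{i=0}^d c_iX^i$ (coefficients in $K$), the Newton polygon of $h$ is the convex hull of the points $(i,v(c_i))$ with $c_i\neq 0$. An edge of a polygon in $\mathbb{R}^2$ is a lower edge if it has an inner normal vector with positive second coordinate. $h$ is called regular if for every lower edge $S$ of its Newton polygon, with vertices $(s,v(c_s))$ and $(s',v(c_{s'}))$, $s>s'$: (1) $S$ contains exactly two points of the set $\{(i,v(c_i)) : 0\leq i\leq d,\ c_i\neq 0\}$; (2) $p\nmid (s-s')$. *)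

From HB Require Import structures.
From mathcomp Require Import all_boot all_order all_algebra.
Set Implicit Arguments. Unset Strict Implicit. Unset Printing Implicit Defensive.
Import Order.TTheory GRing.Theory Num.Theory.
Local Open Scope ring_scope.

(* A (rank <= 1, rational-valued) valuation on a field L, specified on
   nonzero elements; the value of 0 is +oo by convention and v 0 is never used. *)
Definition is_valuation (L : fieldType) (v : L -> rat) : Prop :=
  (forall x y : L, x != 0 -> y != 0 -> v (x * y) = v x + v y) /\
  (forall x y : L, x != 0 -> y != 0 -> x + y != 0 ->
     Num.min (v x) (v y) <= v (x + y)).

Section Setting.
Variables (K : fieldType) (L : closedFieldType) (iota : {rmorphism K -> L})
          (v : L -> rat).

Definition vK (x : K) : rat := v (iota x).

Definition in_A (x : K) : bool := (x == 0) || (0 <= vK x).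

(* x = y modulo the maximal ideal pi A *)
Definition congr_mod_pi (x y : K) : bool := (x - y == 0) || (1 <= vK (x - y)).

Definition cauchy_seq (u : nat -> K) : Prop :=
  forall N : nat, exists M : nat, forall i j : nat, (M <= i)%N -> (M <= j)%N ->
    (u i - u j == 0) || (N%:R <= vK (u i - u j)).

Definition converges_to (u : nat -> K) (l : K) : Prop :=
  forall N : nat, exists M : nat, forall i : nat, (M <= i)%N ->
    (u i - l == 0) || (N%:R <= vK (u i - l)).

(* Standing assumptions: K complete w.r.t. a discrete valuation with
   v(pi) = 1, residue field A/piA finite with q elements and characteristic p;
   v is a valuation on the algebraically closed field L containing K
   (via iota) extending the valuation of K. *)
Definition standing_assumptions (pi : K) (p q : nat) : Prop :=
  [/\ is_valuation v,
      (forall x : K, x != 0 -> denq (vK x) = 1) /\ (pi != 0 /\ vK pi = 1),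
      (forall u : nat -> K, cauchy_seq u -> exists l : K, converges_to u l),
      (exists s : seq K, [/\ size s = q, all in_A s,
          (forall i j : nat, (i < q)%N -> (j < q)%N -> i != j ->
             ~~ congr_mod_pi (nth 0 s i) (nth 0 s j)) &
          (forall a : K, in_A a -> exists2 r, r \in s & congr_mod_pi a r)]) &
      (prime p /\ congr_mod_pi (p%:R) 0)].
End Setting.

Section Newton.
Variables (L : fieldType) (v : L -> rat).

(* (i, v h_i) lies on or above the line through (s', v h_s') and (s, v h_s) *)
Definition on_or_above (h : {poly L}) (s' s i : nat) : bool :=
  (s%:R - s'%:R) * v h`_i >=
    (s%:R - i%:R) * v h`_s' + (i%:R - s'%:R) * v h`_s :> rat.

Definition on_line (h : {poly L}) (s' s i : nat) : bool :=
  (s%:R - s'%:R) * v h`_i ==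
    (s%:R - i%:R) * v h`_s' + (i%:R - s'%:R) * v h`_s :> rat.

(* The segment from (s', v h_s') to (s, v h_s), s' < s, is a lower edge of the
   Newton polygon of h (convex hull of the points (i, v h_i), h_i != 0):
   all points lie on or above its line, and it is the full face cut out by
   that line (its endpoints are the extreme points on the line). *)
Definition lower_edge (h : {poly L}) (s' s : nat) : Prop :=
  [/\ (s' < s)%N, h`_s' != 0, h`_s != 0,
      (forall i, h`_i != 0 -> on_or_above h s' s i) &
      (forall i, h`_i != 0 -> on_line h s' s i -> (s' <= i <= s)%N)].

Definition regular (p : nat) (h : {poly L}) : Prop :=
  forall s' s, lower_edge h s' s ->
    (forall i, h`_i != 0 -> on_line h s' s i -> i = s' \/ i = s) /\
    ~~ (p %| s - s')%N.

(* valuation with value +oo (None) at 0 *)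
Definition vb (z : L) : option rat := if z == 0 then None else Some (v z).
End Newton.

(* Let r be the valuation of a root z0 and tilt the Newton diagram by r,
   replacing v(c_i) by the weight v(c_i) + i r.  This shear preserves lines and
   which side of a line a point lies on, and makes the edge of slope -r
   horizontal.  All roots of f_m have valuation r, so the tilted diagram of f_m
   lies on or above the horizontal segment joining its endpoints 0 and d.  Each
   remaining factor X - z has a unique coefficient of minimal weight, and by
   the ultrametric inequality so does their product g, at some index a.  Hence
   the minimal-weight coefficients of f = g f_m are exactly those of f_m
   shifted by a: [a, a + d] is a lower edge of f, and the regularity of f on it
   is the regularity of f_m on [0, d], its only lower edge.  For m = +oo, f_m
   is a power of X and has no lower edge at all. *)

From HB Require Import structures.
From mathcomp Require Import all_boot all_order all_algebra.
From mathcomp Require Import zify ring lra.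
Set Implicit Arguments. Unset Strict Implicit.
Import Order.TTheory GRing.Theory Num.Theory.
Local Open Scope ring_scope.

Lemma coef_neq0_leq (R : nzSemiRingType) (h : {poly R}) d i :
  (size h <= d.+1)%N -> h`_i != 0 -> (i <= d)%N.
Proof.
move=> szh; apply: contraNT; rewrite -ltnNge => di.
by rewrite nth_default // (leq_trans szh).
Qed.

(* An affine function that is [<= 0] at [0] and at [d] and [>= 0] at two points
   [s' < s] of [[0, d]] vanishes at both; [a - W] and [b - W] are its values
   at [s'] and [s]. *)
Lemma chord_vanish (s' s d W a b : rat) : 0 <= s' -> s' < s -> s <= d ->
  W <= a -> W <= b ->
  (s - d) * a + (d - s') * b <= (s - s') * W ->
  (s - 0) * a + (0 - s') * b <= (s - s') * W -> a = W /\ b = W.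
Proof.
move=> s'0 ss' sd Wa Wb hd h0.
have e : d * (s - s') * (b - W) =
  s * ((s - d) * a + (d - s') * b - (s - s') * W) +
  (d - s) * ((s - 0) * a + (0 - s') * b - (s - s') * W) by ring.
have : d * (s - s') * (b - W) <= 0.
  by rewrite e -[0]addr0 lerD // mulr_ge0_le0 //; lra.
rewrite pmulr_rle0; last by apply: mulr_gt0; lra.
move=> bW; have bWe : b = W by lra.
split=> //; move: h0; rewrite bWe => h0.
have : s * (a - W) <= 0 by lra.
by rewrite pmulr_rle0; lra.
Qed.

Section Valuation.
Variables (L : fieldType) (v : L -> rat).
Hypothesis hv : is_valuation v.

Lemma valuation1 : v 1 = 0.
Proof.
have [vM _] := hv; have := vM 1 1 (oner_neq0 _) (oner_neq0 _).
rewrite mulr1; lra.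
Qed.

Lemma valuationN x : x != 0 -> v (- x) = v x.
Proof.
move=> x0; have [vM _] := hv.
have N1 : (-1 : L) != 0 by rewrite oppr_eq0 oner_neq0.
have := vM _ _ N1 N1; rewrite mulrNN mulr1 valuation1 => vN1.
by rewrite -mulN1r vM //; lra.
Qed.

Lemma valuationM x y : x * y != 0 -> v (x * y) = v x + v y.
Proof. by rewrite mulf_eq0 negb_or => /andP[x0 y0]; apply: hv.1. Qed.

(* [vgt c x] means [c < v x] under the convention [v 0 = +oo]; the value
   [v 0] itself is junk. *)
Definition vgt (c : rat) (x : L) := (x == 0) || (c < v x).
Definition vge (c : rat) (x : L) := (x == 0) || (c <= v x).

Lemma vgtD c x y : vgt c x -> vgt c y -> vgt c (x + y).
Proof.
move=> /orP[/eqP-> | cx]; first by rewrite add0r.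
move=> /orP[/eqP-> | cy]; first by rewrite addr0 /vgt cx orbT.
have [-> | xy0] := eqVneq (x + y) 0; first by rewrite /vgt eqxx.
have [-> | x0] := eqVneq x 0; first by rewrite add0r /vgt cy orbT.
have [-> | y0] := eqVneq y 0; first by rewrite addr0 /vgt cx orbT.
by rewrite /vgt (lt_le_trans _ (hv.2 _ _ x0 y0 xy0)) ?orbT // lt_min cx cy.
Qed.

Lemma vgeD c x y : vge c x -> vge c y -> vge c (x + y).
Proof.
move=> /orP[/eqP-> | cx]; first by rewrite add0r.
move=> /orP[/eqP-> | cy]; first by rewrite addr0 /vge cx orbT.
have [-> | xy0] := eqVneq (x + y) 0; first by rewrite /vge eqxx.
have [-> | x0] := eqVneq x 0; first by rewrite add0r /vge cy orbT.
have [-> | y0] := eqVneq y 0; first by rewrite addr0 /vge cx orbT.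
by rewrite /vge (le_trans _ (hv.2 _ _ x0 y0 xy0)) ?orbT // le_min cx cy.
Qed.

Lemma vgt_sum (I : Type) (s : seq I) (P : pred I) (F : I -> L) c :
  (forall i, P i -> vgt c (F i)) -> vgt c (\sum_(i <- s | P i) F i).
Proof. by apply: (big_ind (vgt c)); [rewrite /vgt eqxx | exact: vgtD]. Qed.

Lemma vge_sum (I : Type) (s : seq I) (P : pred I) (F : I -> L) c :
  (forall i, P i -> vge c (F i)) -> vge c (\sum_(i <- s | P i) F i).
Proof. by apply: (big_ind (vge c)); [rewrite /vge eqxx | exact: vgeD]. Qed.

Lemma valuationD_eq x y : x != 0 -> vgt (v x) y -> x + y != 0 /\ v (x + y) = v x.
Proof.
move=> x0; have [-> _ | y0 /orP[/eqP y0' | vxy]] := eqVneq y 0; first by rewrite addr0.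
  by rewrite y0' eqxx in y0.
have xy0 : x + y != 0.
  apply: contraTneq vxy => /(canRL (addKr x)); rewrite addr0 => ->.
  by rewrite valuationN // ltxx.
split=> //; have := hv.2 _ _ x0 y0 xy0.
have Ny0 : - y != 0 by rewrite oppr_eq0.
have := hv.2 _ _ xy0 Ny0; rewrite addrK x0 valuationN // => /(_ isT).
by rewrite /Num.min; case: ifP => _; case: ifP => _; lra.
Qed.

Section Tilt.
Variable r : rat.
Implicit Types (z : L) (P Q G F : {poly L}) (W : rat).

Definition wt (P : {poly L}) (i : nat) : rat := v P`_i + i%:R * r.

Definition wt_lb (P : {poly L}) (W : rat) := forall t, P`_t != 0 -> W <= wt P t.

Definition wt_min_at (P : {poly L}) (i : nat) (W : rat) :=
  [/\ P`_i != 0, wt P i = W & wt_lb P W].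

Definition wt_min_uniq (P : {poly L}) (i : nat) (W : rat) :=
  wt_min_at P i W /\ (forall t, P`_t != 0 -> wt P t = W -> t = i).

Lemma wt_min_at_lb P i W : wt_min_at P i W -> wt_lb P W.
Proof. by case. Qed.

Lemma wt_min_uniq1 : wt_min_uniq 1 0 0.
Proof.
have wt10 : wt 1 0 = 0 by rewrite /wt coef1 valuation1 mul0r addr0.
split; first split; rewrite ?coef1 ?oner_neq0 //.
  by move=> [|t]; rewrite ?wt10 // coef1 /= eqxx.
by move=> [|t] //; rewrite coef1 /= eqxx.
Qed.

Lemma valuation_coefM_term P Q k t : (k <= t)%N -> P`_k * Q`_(t - k) != 0 ->
  v (P`_k * Q`_(t - k)) = wt P k + wt Q (t - k) - t%:R * r.
Proof. by move=> kt nz; rewrite valuationM // /wt natrB //; ring. Qed.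

Lemma wt_lbM P Q W1 W2 : wt_lb P W1 -> wt_lb Q W2 -> wt_lb (P * Q) (W1 + W2).
Proof.
move=> hP hQ t PQt.
suff /orP[/eqP PQt0 | ] : vge (W1 + W2 - t%:R * r) (P * Q)`_t.
- by rewrite PQt0 eqxx in PQt.
- by rewrite /wt; lra.
rewrite coefM; apply: vge_sum => k _.
have [-> | nz] := eqVneq (P`_k * Q`_(t - k)) 0; first by rewrite /vge eqxx.
have /andP[Pk Qk] : (P`_k != 0) && (Q`_(t - k) != 0) by rewrite -negb_or -mulf_eq0.
rewrite /vge (negbTE nz) valuation_coefM_term ?(ltnSE (ltn_ord k)) //.
by have := hP _ Pk; have := hQ _ Qk; lra.
Qed.

Lemma coefM_wt_min_split G F a Wg WF t : wt_min_uniq G a Wg -> wt_lb F WF ->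
  exists2 R, (G * F)`_t = (if (a <= t)%N then G`_a * F`_(t - a) else 0) + R
           & vgt (Wg + WF - t%:R * r) R.
Proof.
move=> [[_ _ Glb] Guniq] Flb.
exists (\sum_(k < t.+1 | k != a :> nat) G`_k * F`_(t - k)).
  rewrite coefM; case: leqP => [at_ | ta].
    by rewrite (bigD1 (Ordinal (at_ : (a < t.+1)%N))).
  by rewrite add0r; apply: eq_bigl => k; rewrite ltn_eqF // (leq_trans (ltn_ord k)).
apply: vgt_sum => k ka; have [-> | nz] := eqVneq (G`_k * F`_(t - k)) 0.
  by rewrite /vgt eqxx.
have /andP[Gk Fk] : (G`_k != 0) && (F`_(t - k) != 0) by rewrite -negb_or -mulf_eq0.
have Gk_gt : Wg < wt G k.
  by rewrite lt_neqAle Glb // andbT; apply: contra ka => /eqP/esym/(Guniq _ Gk)->.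
rewrite /vgt (negbTE nz) valuation_coefM_term ?(ltnSE (ltn_ord k)) //.
by have := Flb _ Fk; lra.
Qed.

(* The coefficients of [G * F] of minimal weight are exactly the shifts by [a]
   of those of [F]: every other product term has strictly larger weight. *)
Lemma wt_min_uniq_coefM G F a Wg WF t : wt_min_uniq G a Wg -> wt_lb F WF ->
  ((G * F)`_t != 0 /\ wt (G * F) t = Wg + WF) <->
  [/\ (a <= t)%N, F`_(t - a) != 0 & wt F (t - a) = WF].
Proof.
move=> Gmin Flb; rewrite {1}/wt; have [R -> Rgt] := coefM_wt_min_split t Gmin Flb.
have [[Ga0 wGa _] _] := Gmin; set c := Wg + WF - t%:R * r in Rgt.
have notmin x : x != 0 /\ v x + t%:R * r = Wg + WF -> vgt c x = false.
  by move=> [x0 vx]; rewrite /vgt (negbTE x0) /c; apply/negbTE; rewrite -leNgt; lra.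
case: leqP => [at_ | ta]; last first.
  by rewrite add0r; split=> [/notmin | []]; rewrite ?Rgt // leqNgt ta.
have [T0 | Tnz] := eqVneq (G`_a * F`_(t - a)) 0.
  rewrite T0 add0r; split=> [/notmin | [_ Fta _]]; first by rewrite Rgt.
  by move/eqP: T0; rewrite mulf_eq0 (negbTE Ga0) (negbTE Fta).
have Fta : F`_(t - a) != 0 by move: Tnz; rewrite mulf_eq0 negb_or => /andP[].
have vT := valuation_coefM_term at_ Tnz; rewrite wGa in vT.
have [wFta | wFta] := eqVneq (wt F (t - a)) WF.
  have RgtT : vgt (v (G`_a * F`_(t - a))) R by rewrite vT wFta.
  have [TR0 ->] := valuationD_eq Tnz RgtT.
  by split=> // _; split=> //; rewrite vT wFta; lra.
have Tgt : vgt c (G`_a * F`_(t - a)).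
  rewrite /vgt (negbTE Tnz) vT /c; have := Flb _ Fta.
  by rewrite le_eqVlt eq_sym (negbTE wFta) /= => ?; lra.
by split=> [/notmin | [_ _ /eqP]]; rewrite ?(vgtD Tgt Rgt) // (negbTE wFta).
Qed.

Lemma wt_min_uniqM P Q i j W1 W2 :
  wt_min_uniq P i W1 -> wt_min_uniq Q j W2 -> wt_min_uniq (P * Q) (i + j) (W1 + W2).
Proof.
move=> Pmin [[Qj0 wQj Qlb] Quniq]; have face t := wt_min_uniq_coefM t Pmin Qlb.
have [PQ0 wPQ] : (P * Q)`_(i + j) != 0 /\ wt (P * Q) (i + j) = W1 + W2.
  by apply/face; rewrite leq_addr addKn.
split; first by split=> //; exact: wt_lbM (wt_min_at_lb (proj1 Pmin)) Qlb.
move=> t PQt wt_t; have [it Qt wQt] := (face t).1 (conj PQt wt_t).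
by rewrite -(Quniq _ Qt wQt) subnKC.
Qed.

Lemma wt_min_at0M P Q W1 W2 :
  wt_min_at P 0 W1 -> wt_min_at Q 0 W2 -> wt_min_at (P * Q) 0 (W1 + W2).
Proof.
move=> [P0 wP0 Plb] [Q0 wQ0 Qlb]; have PQ0 : P`_0 * Q`_0 != 0 by rewrite mulf_neq0.
split; [by rewrite coef0M | | exact: wt_lbM].
by move: wP0 wQ0; rewrite /wt coef0M valuationM // !mul0r !addr0 => -> ->.
Qed.

Lemma wt_min_uniq_prod (I : Type) (s : seq I) (S : pred I) (F : I -> {poly L}) :
  (forall i, S i -> exists k W, wt_min_uniq (F i) k W) ->
  exists k W, wt_min_uniq (\prod_(i <- s | S i) F i) k W.
Proof.
apply: (big_ind (fun P => exists k W, wt_min_uniq P k W)).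
  by exists 0%N, 0; exact: wt_min_uniq1.
by move=> P Q [i [W1 h1]] [j [W2 h2]]; exists (i + j)%N, (W1 + W2); exact: wt_min_uniqM.
Qed.

Lemma wt_min_at0_prod (I : Type) (s : seq I) (S : pred I)
    (F : I -> {poly L}) (W : I -> rat) :
  (forall i, S i -> wt_min_at (F i) 0 (W i)) ->
  wt_min_at (\prod_(i <- s | S i) F i) 0 (\sum_(i <- s | S i) W i).
Proof.
apply: (big_ind2 (fun P w => wt_min_at P 0 w)); first exact: wt_min_uniq1.1.
by move=> P W1 Q W2; exact: wt_min_at0M.
Qed.

Lemma coefXsubC_neq0 z t : ('X - z%:P)`_t != 0 -> (t <= 1)%N.
Proof. by rewrite polyseqXsubC; case: t => [|[|t]] //=; rewrite nth_nil eqxx. Qed.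

Lemma wt_XsubC0 z : z != 0 -> wt ('X - z%:P) 0 = v z.
Proof. by move=> z0; rewrite /wt polyseqXsubC /= valuationN // mul0r addr0. Qed.

Lemma wt_XsubC1 z : wt ('X - z%:P) 1 = r.
Proof. by rewrite /wt polyseqXsubC /= valuation1 mul1r add0r. Qed.

Lemma wt_min_at_XsubC z : z != 0 -> v z = r -> wt_min_at ('X - z%:P) 0 r.
Proof.
move=> z0 vz; split; [by rewrite polyseqXsubC /= oppr_eq0 | by rewrite wt_XsubC0 |].
by move=> t /coefXsubC_neq0; case: t => [|[|]] // _; rewrite ?wt_XsubC0 ?wt_XsubC1 ?vz.
Qed.

Lemma wt_min_uniq_XsubC_lt z : z != 0 -> v z < r -> wt_min_uniq ('X - z%:P) 0 (v z).
Proof.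
move=> z0 vz; split; first split.
- by rewrite polyseqXsubC /= oppr_eq0.
- exact: wt_XsubC0.
- by move=> t /coefXsubC_neq0; case: t => [|[|]] // _; rewrite ?wt_XsubC0 ?wt_XsubC1 // ltW.
- move=> t /coefXsubC_neq0; case: t => [|[|]] // _.
  by rewrite wt_XsubC1 => rvz; rewrite rvz ltxx in vz.
Qed.

Lemma wt_min_uniq_XsubC_gt z : vgt r z -> wt_min_uniq ('X - z%:P) 1 r.
Proof.
move=> rz; have coef0_neq0 : ('X - z%:P)`_0 != 0 -> r < wt ('X - z%:P) 0.
  rewrite polyseqXsubC /= oppr_eq0 => z0.
  by rewrite wt_XsubC0 //; move: rz; rewrite /vgt (negbTE z0).
split; first split.
- by rewrite polyseqXsubC /= oner_neq0.
- exact: wt_XsubC1.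
- move=> [|[|t]] Xt; [exact/ltW/coef0_neq0 | by rewrite wt_XsubC1 |].
  by have := coefXsubC_neq0 Xt.
- move=> [|[|t]] Xt // wXt; first by have := coef0_neq0 Xt; rewrite wXt ltxx.
  by have := coefXsubC_neq0 Xt.
Qed.

Lemma wt_min_uniq_prod_XsubC (s : seq L) (S : pred L) :
  (forall z, S z -> (z == 0) || (v z != r)) ->
  exists a W, wt_min_uniq (\prod_(z <- s | S z) ('X - z%:P)) a W.
Proof.
move=> hS; apply: wt_min_uniq_prod => z /hS.
have [-> _ | z0] := eqVneq z 0.
  by exists 1%N, r; apply: wt_min_uniq_XsubC_gt; rewrite /vgt eqxx.
case: (ltgtP (v z) r) => // [vz _ | vz _].
  by exists 0%N, (v z); exact: wt_min_uniq_XsubC_lt.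
by exists 1%N, r; apply: wt_min_uniq_XsubC_gt; rewrite /vgt vz orbT.
Qed.

Lemma wt_min_at_prod_XsubC (s : seq L) (S : pred L) :
  (forall z, S z -> z != 0 /\ v z = r) ->
  wt_min_at (\prod_(z <- s | S z) ('X - z%:P)) 0 (r *+ count S s).
Proof.
move=> hS; rewrite -iter_addr_0 -big_const_seq.
by apply: wt_min_at0_prod => z /hS[z0 vz]; exact: wt_min_at_XsubC.
Qed.

(* Adding [i * r] to the ordinate is a shear of the plane: it preserves lines
   and the side of a line a point lies on. *)
Lemma on_or_above_wt h s' s i : on_or_above v h s' s i =
  ((s%:R - i%:R) * wt h s' + (i%:R - s'%:R) * wt h s <= (s%:R - s'%:R) * wt h i).
Proof.
rewrite /on_or_above /wt -(lerD2r ((s%:R - s'%:R) * (i%:R * r))).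
by congr (_ <= _); ring.
Qed.

Lemma on_line_wt h s' s i : on_line v h s' s i =
  ((s%:R - s'%:R) * wt h i == (s%:R - i%:R) * wt h s' + (i%:R - s'%:R) * wt h s).
Proof.
rewrite /on_line /wt -(inj_eq (addIr ((s%:R - s'%:R) * (i%:R * r)))).
by congr (_ == _); ring.
Qed.

Lemma on_line_flat h s' s W i : (s' < s)%N -> wt h s' = W -> wt h s = W ->
  on_or_above v h s' s i = (W <= wt h i) /\ on_line v h s' s i = (wt h i == W).
Proof.
move=> ss ws' ws; rewrite on_or_above_wt on_line_wt ws' ws.
have -> : (s%:R - i%:R) * W + (i%:R - s'%:R) * W = (s%:R - s'%:R) * W by ring.
have ss_pos : 0 < s%:R - s'%:R :> rat by rewrite subr_gt0 ltr_nat.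
by rewrite ler_pM2l // (inj_eq (mulfI (lt0r_neq0 ss_pos))).
Qed.

Lemma lower_edge_flat h W s' s : (s' < s)%N -> wt_lb h W ->
  h`_s' != 0 -> h`_s != 0 -> wt h s' = W -> wt h s = W ->
  (forall i, h`_i != 0 -> wt h i = W -> (s' <= i <= s)%N) -> lower_edge v h s' s.
Proof.
move=> ss lb hs' hs ws' ws face; split=> // i hi.
  by rewrite (on_line_flat i ss ws' ws).1 lb.
by rewrite (on_line_flat i ss ws' ws).2 => /eqP; apply: face.
Qed.

Lemma lower_edge_single h W d s' s : wt_min_at h 0 W -> h`_d != 0 -> wt h d = W ->
  (size h <= d.+1)%N -> lower_edge v h s' s -> s' = 0%N /\ s = d.
Proof.
move=> [h0 wh0 lb] hd whd szh [ss hs' hs above face].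
have sd : (s <= d)%N by apply: coef_neq0_leq szh hs.
have [ws' ws] : wt h s' = W /\ wt h s = W.
  have := above 0%N h0; have := above d hd; rewrite !on_or_above_wt wh0 whd mulr0n.
  apply: chord_vanish; rewrite ?ler_nat ?ltr_nat ?lb //.
have [onl0 onld] := (face 0%N h0, face d hd).
rewrite !(on_line_flat _ ss ws' ws).2 wh0 whd eqxx in onl0 onld.
have [/andP[s'0 _] /andP[_ ds]] := (onl0 isT, onld isT).
by split; apply/eqP; rewrite eqn_leq ?s'0 ?sd ?ds.
Qed.

(* The flat edge [[0, d]] of [F] reappears, shifted by [a], as a lower edge of
   [G * F]. *)
Lemma regular_mul_flat (p : nat) G F a Wg W d : wt_min_uniq G a Wg ->
  wt_min_at F 0 W -> F`_d != 0 -> wt F d = W -> (size F <= d.+1)%N ->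
  regular v p (G * F) -> regular v p F.
Proof.
move=> Gmin Fmin Fd wFd szF regGF s' s edge.
have [s'0 sd] := lower_edge_single Fmin Fd wFd szF edge; subst s' s.
have [[F0 wF0 Flb] [dpos _ _ _ _]] := (Fmin, edge).
have face t := wt_min_uniq_coefM t Gmin Flb.
have [GFa wGFa] : (G * F)`_a != 0 /\ wt (G * F) a = Wg + W by apply/face; rewrite subnn.
have [GFad wGFad] : (G * F)`_(a + d) != 0 /\ wt (G * F) (a + d) = Wg + W.
  by apply/face; rewrite leq_addr addKn.
have ltad : (a < a + d)%N by lia.
have GFedge : lower_edge v (G * F) a (a + d).
  have GFlb := wt_lbM (wt_min_at_lb (proj1 Gmin)) Flb.
  apply: (lower_edge_flat ltad GFlb GFa GFad wGFa wGFad) => i GFi wi.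
  have [ai Fi _] := (face i).1 (conj GFi wi).
  by rewrite ai -leq_subLR; apply: coef_neq0_leq szF Fi.
have [onl pd] := regGF _ _ GFedge; split; last by rewrite subn0 -(addKn a d).
move=> i Fi; rewrite (on_line_flat i dpos wF0 wFd).2 => /eqP wi.
have [GFai wGFai] : (G * F)`_(a + i) != 0 /\ wt (G * F) (a + i) = Wg + W.
  by apply/face; rewrite leq_addr addKn.
have := onl _ GFai; rewrite (on_line_flat _ ltad wGFa wGFad).2 wGFai eqxx.
by case=> // [/(canRL (addKn a)) | /addnI]; rewrite ?subnn; [left | right].
Qed.

End Tilt.
End Valuation.

Lemma regular_Xn (L : fieldType) (v : L -> rat) (p n : nat) : regular v p 'X^n.
Proof.
move=> s' s [ss + + _ _]; rewrite !coefXn.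
have [e' | _] := eqVneq s' n; last by rewrite mulr0n eqxx.
have [e | _] := eqVneq s n; last by rewrite mulr0n eqxx.
by rewrite e e' ltnn in ss.
Qed.

Theorem theorem2p4 (K : fieldType) (L : closedFieldType)
  (iota : {rmorphism K -> L}) (v : L -> rat) (pi : K) (p q : nat) :
  standing_assumptions iota v pi p q ->
  forall f : {poly K}, f \is monic -> (1 < size f)%N ->
  regular v p (map_poly iota f) ->
  forall rs : seq L, map_poly iota f = \prod_(z <- rs) ('X - z%:P) ->
  forall m : option rat, (exists2 z, z \in rs & vb v z = m) ->
  regular v p (\prod_(z <- rs | vb v z == m) ('X - z%:P)).
Proof.
move=> [hv _ _ _ _] f _ _ freg rs frs _ [z0 _ <-].
have [-> | z0_neq0] := eqVneq z0 0.
  rewrite (eq_bigr (fun=> 'X ^+ 1)) ?prodrXr; first exact: regular_Xn.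
  move=> z; rewrite /vb eqxx; have [-> _ | //] := eqVneq z 0.
  by rewrite polyC0 subr0 expr1.
set r := v z0; have -> : vb v z0 = Some r by rewrite /vb (negbTE z0_neq0).
set S := fun z => vb v z == Some r.
have vbS z : S z = (z != 0) && (v z == r) by rewrite /S /vb; have [] := eqVneq z 0.
have [a [Wg Gmin]] : exists a Wg,
    wt_min_uniq v r (\prod_(z <- rs | ~~ S z) ('X - z%:P)) a Wg.
  by apply: (wt_min_uniq_prod_XsubC hv) => z; rewrite vbS negb_and negbK.
have Fmin : wt_min_at v r (\prod_(z <- rs | S z) ('X - z%:P)) 0 (r *+ count S rs).
  by apply: (wt_min_at_prod_XsubC hv) => z; rewrite vbS => /andP[-> /eqP].
set F := \prod_(z <- rs | S z) _ in Fmin *; set d := count S rs in Fmin *.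
have szF : size F = d.+1 by rewrite /F -big_filter size_prod_XsubC size_filter.
have Fd : F`_d = 1 by have /monicP := monic_prod_XsubC rs S id; rewrite lead_coefE szF.
apply: (regular_mul_flat hv Gmin Fmin (d := d)); rewrite ?szF ?Fd ?oner_neq0 //.
  by rewrite /wt Fd valuation1 // add0r mulr_natl.
by move: freg; rewrite frs (bigID S) mulrC.
Qed.
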